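(* Let $d\ge1$. There exist $C>0$ and $N\in\mathbb{N}$ such that $\mathrm{ex}(n,\mathcal{F}_d)\ge C\,n^{\,d+1-\frac{2(d+1)}{3^{d+1}-1}}$ for all $n\ge N$.
   Context: A $k$-graph is a hypergraph whose edges are all $k$-element subsets of a finite vertex set. A $k$-graph is $\mathcal{F}$-free if it has no subhypergraph isomorphic to a member of $\mathcal{F}$; $\mathrm{ex}(n,\mathcal{F})$ is the maximum number of edges of an $\mathcal{F}$-free $k$-graph on $n$ vertices. A simplicial complex is a nonempty family of subsets of a finite vertex set closed under subsets; $\dim F=|F|-1$. A complex $K$ with vertex set identified with a subset of $[n]$ is nice on $[n]$ if for every $F\subseteq[n]$ exactly one of $F$, $[n]\setminus F$ lies in $K$. The join $K_1*K_2$ has vertex set $V(K_1)\sqcup V(K_2)$ and simplices $F_1\sqcup F_2$ with $F_i\in K_i$. For a $d$-dimensional complex $K$, $(K)^d$ is the $(d+1)$-graph on $V(K)$ whose edges are the $d$-simplices of $K$. $\mathcal{F}_d$ is the family of $(d+1)$-graphs $(K_1*\cdots*K_s)^d$ where $s\ge1$, each $K_i$ is nice on $[n_i]$, $\dim(K_1*\cdots*K_s)=d$, and $n_1+\cdots+n_s=2d+s+2$. *)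

From Stdlib Require Import ClassicalEpsilon.
From mathcomp Require Import all_boot.
Set Implicit Arguments. Unset Strict Implicit. Unset Printing Implicit Defensive.

Definition is_complex (n : nat) (K : {set {set 'I_n}}) : Prop :=
  K != set0 /\ forall F G : {set 'I_n}, F \in K -> G \subset F -> G \in K.

Definition nice (n : nat) (K : {set {set 'I_n}}) : Prop :=
  forall F : {set 'I_n}, (F \in K) (+) (~: F \in K).

Section Join.
Variables (s : nat) (ns : 'I_s -> nat) (K : forall i : 'I_s, {set {set 'I_(ns i)}}).

Definition jtype : finType := {i : 'I_s & 'I_(ns i)}.

Definition fiber (i : 'I_s) (F : {set jtype}) : {set 'I_(ns i)} :=
  [set x | Tagged (fun j => 'I_(ns j)) x \in F].

(* Simplices of K_1 * ... * K_s: disjoint unions of simplices F_i in K_i. *)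
Definition join : {set {set jtype}} :=
  [set F : {set jtype} | [forall i, fiber i F \in K i]].

Definition join_vertices : {set jtype} := [set v | [set v] \in join].

Definition join_dim_eq (d : nat) : Prop :=
  (exists2 F, F \in join & #|F| = d.+1) /\ (forall F, F \in join -> #|F| <= d.+1).

Definition join_edges (d : nat) : {set {set jtype}} :=
  [set F in join | #|F| == d.+1].
End Join.

Definition contains_copy (V : finType) (VS : {set V}) (E : {set {set V}})
  (n : nat) (H : {set {set 'I_n}}) : Prop :=
  exists f : V -> 'I_n, {in VS &, injective f} /\ (forall e, e \in E -> f @: e \in H).

Definition Fd_free (d n : nat) (H : {set {set 'I_n}}) : Prop :=
  forall (s : nat) (ns : 'I_s -> nat) (K : forall i : 'I_s, {set {set 'I_(ns i)}}),
    1 <= s ->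
    (forall i, is_complex (K i)) ->
    (forall i, nice (K i)) ->
    join_dim_eq K d ->
    \sum_(i < s) ns i = d.*2 + s + 2 ->
    ~ contains_copy (join_vertices K) (join_edges K d) H.

Definition uniform (k n : nat) (H : {set {set 'I_n}}) : bool :=
  [forall e in H, #|e| == k].

Definition Fd_freeb (d n : nat) (H : {set {set 'I_n}}) : bool :=
  if excluded_middle_informative (@Fd_free d n H) then true else false.

Definition ex_Fd (d n : nat) : nat :=
  \max_(H : {set {set 'I_n}} | uniform d.+1 H && Fd_freeb d H) #|H|.

From Stdlib Require Import ClassicalEpsilon.
From mathcomp Require Import all_boot zify.
Set Implicit Arguments. Unset Strict Implicit. Unset Printing Implicit Defensive.

(* Throughout k = d+1, w = 3k and E = 3^k.
   1. Structure of F_d.  If K_1 * ... * K_s is a member of F_d and a_i is the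
      size of a largest face of K_i, niceness gives n_i <= 2 a_i + 1, the
      dimension condition gives sum a_i = k, and the vertex count condition
      then forces n_i = 2 a_i + 1, so every a_i-subset of [n_i] is a face.
      Hence the member has at most 3k vertices and at least
      prod C(2 a_i + 1, a_i) >= 3^k edges.
   2. So a k-graph in which no w vertices span E edges (no "dense
      configuration") is F_d-free.
   3. Deletion: some m-set of k-subsets of [n] contains at most
      n^w 2^(2^w) (m/N)^E dense configurations, N = C(n, k); deleting one edge
      from each leaves an F_d-free k-graph.
   4. Taking m maximal with D m^(E-1) <= n^(kE-w) for a suitable constant D
      yields ex(n, F_d) >= m/2, of order n^((kE-w)/(E-1)), and
      (kE-w)/(E-1) is the exponent of the statement. *)

Lemma exists_subset_card (T : finType) (B : {set T}) k :
  k <= #|B| -> exists2 A : {set T}, A \subset B & #|A| = k.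
Proof.
move=> hk; have : 0 < #|[set A : {set T} | A \subset B & #|A| == k]|.
  by rewrite cards_draws bin_gt0.
by case/card_gt0P => A; rewrite inE => /andP[AB /eqP cA]; exists A.
Qed.

Lemma exists_superset_card (T : finType) (A : {set T}) k :
  #|A| <= k -> k <= #|T| -> exists2 B : {set T}, A \subset B & #|B| = k.
Proof.
move=> Ak kT; have [Z ZC cZ] : exists2 Z : {set T}, Z \subset ~: A & #|Z| = k - #|A|.
  by apply: exists_subset_card; have := cardsC A; lia.
exists (A :|: Z); first exact: subsetUl.
rewrite cardsU; have -> : A :&: Z = set0.
  apply/setP => x; rewrite !inE; apply/negP => /andP[xA xZ].
  by have := subsetP ZC _ xZ; rewrite inE xA.
by rewrite cards0 cZ; lia.
Qed.

Lemma card_bigcup_le (T I : finType) (P : pred I) (F : I -> {set T}) :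
  #|\bigcup_(i | P i) F i| <= \sum_(i | P i) #|F i|.
Proof.
elim/big_rec2: _ => [|i x y _ h]; first by rewrite cards0.
by apply: leq_trans (leq_card_setU _ _) _; rewrite leq_add2l.
Qed.

Lemma sum_eq_termwise (I : finType) (f g : I -> nat) :
  (forall i, f i <= g i) -> \sum_i f i = \sum_i g i -> forall i, f i = g i.
Proof.
move=> fg sum_fg i; apply/eqP; rewrite eqn_leq fg /= leqNgt; apply/negP => lt_fg.
move: sum_fg; rewrite (bigD1 i) //= [in RHS](bigD1 i) //=.
have : \sum_(j | j != i) f j <= \sum_(j | j != i) g j by apply: leq_sum.
lia.
Qed.

Lemma imset_inj_on_subsets (T U : finType) (f : T -> U) (V : {set T}) :
  {in V &, injective f} ->
  {in [pred e : {set T} | e \subset V] &, injective (fun e : {set T} => f @: e)}.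
Proof.
move=> f_inj.
have sub_of_img (x y : {set T}) : x \subset V -> y \subset V ->
    f @: x = f @: y -> x \subset y.
  move=> xV yV fxy; apply/subsetP => z zx.
  have : f z \in f @: y by rewrite -fxy imset_f.
  by case/imsetP => t ty /f_inj -> //; [apply: (subsetP xV) | apply: (subsetP yV)].
move=> e1 e2 e1V e2V fe.
by apply/eqP; rewrite eqEsubset; apply/andP; split; apply: sub_of_img.
Qed.

Lemma small_transversal (X : finType) (F : {set {set X}}) :
  (forall S, S \in F -> S != set0) ->
  exists2 R : {set X}, #|R| <= #|F| &
    forall S, S \in F -> exists2 x, x \in S & x \in R.
Proof.
move=> F_nonempty.
pose R := \bigcup_(S in F) (if [pick x in S] is Some x then [set x] else set0).
exists R => [|S SF].
  apply: leq_trans (card_bigcup_le _ _) _; rewrite -sum1_card; apply: leq_sum => S _.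
  by case: pickP => [x _|_]; rewrite ?cards1 ?cards0.
have [x xS] := set0Pn S (F_nonempty S SF).
have [y pick_y] : exists y, [pick z in S] = Some y.
  by case: pickP => [y _|/(_ x)]; [exists y | rewrite xS].
have yS : y \in S by move: pick_y; case: pickP => // z zS [<-].
exists y => //.
by apply/bigcupP; exists S => //; rewrite pick_y inE.
Qed.

(* 3^m <= C(2m+1, m), by induction using
   C(2m+3, m+1) = C(2m+2, m) + C(2m+1, m) + C(2m+1, m+1) >= 3 C(2m+1, m). *)
Lemma expn3_le_bin_central m : 3 ^ m <= 'C(m.*2.+1, m).
Proof.
elim: m => [|m ih] //.
have -> : (m.+1).*2.+1 = (m.*2.+2).+1 by rewrite doubleS.
rewrite binS binS.
have sym : 'C(m.*2.+1, m.+1) = 'C(m.*2.+1, m).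
  have hm : m <= m.*2.+1 by rewrite -addnn; lia.
  by rewrite -(bin_sub hm); congr 'C(_, _); rewrite -addnn; lia.
have mono : 'C(m.*2.+1, m) <= 'C(m.*2.+2, m) by apply: leq_bin2l.
rewrite sym expnS; lia.
Qed.

(* C(N-E, m-E) N^E <= C(N, m) m^E: the probability that a uniformly random
   m-subset of an N-set contains a fixed E-set is at most (m/N)^E. *)
Lemma bin_shift_le N m E :
  E <= m -> m <= N -> 'C(N - E, m - E) * N ^ E <= 'C(N, m) * m ^ E.
Proof.
move=> Em mN; elim: E Em => [|E ih] ltEm; first by rewrite !subn0 !expn0.
set X := 'C(N - E.+1, m - E.+1); set Y := 'C(N - E, m - E).
have XY : (N - E) * X = (m - E) * Y.
  have := mul_bin_diag (N - E) (m - E.+1).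
  have -> : (N - E).-1 = N - E.+1 by lia.
  by have -> : (m - E.+1).+1 = m - E by lia.
have step : X * N <= Y * m.
  rewrite -(@leq_pmul2r (N - E)); last by lia.
  have -> : X * N * (N - E) = Y * ((m - E) * N) by rewrite mulnA -[Y * _]mulnC -XY; lia.
  have shift : (m - E) * N <= m * (N - E).
    rewrite mulnBl mulnBr [m * N]mulnC; apply: leq_sub2l.
    by rewrite mulnC leq_mul.
  by rewrite -[Y * m * _]mulnA leq_mul2l shift orbT.
rewrite !expnS mulnA; apply: leq_trans (_ : Y * m * N ^ E <= _); first exact: leq_mul.
have -> : Y * m * N ^ E = m * (Y * N ^ E) by lia.
have -> : 'C(N, m) * (m * m ^ E) = m * ('C(N, m) * m ^ E) by lia.
by rewrite leq_mul2l (ih (ltnW ltEm)) orbT.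
Qed.

Lemma ffact_le_expn n w : n ^_ w <= n ^ w.
Proof.
elim: w => [|w ih] //; rewrite ffactnSr expnSr.
by apply: leq_mul => //; apply: leq_subr.
Qed.

Lemma bin_le_expn n w : 'C(n, w) <= n ^ w.
Proof.
apply: leq_trans (ffact_le_expn n w); rewrite -bin_ffact.
by apply: leq_pmulr; apply: fact_gt0.
Qed.

Lemma expn_le_ffact n j : j.*2 <= n -> n ^ j <= n ^_ j * 2 ^ j.
Proof.
elim: j => [|j ih] jn //.
have ih' : n ^ j <= n ^_ j * 2 ^ j by apply: ih; rewrite -!addnn in jn *; lia.
have half : n <= (n - j) * 2 by rewrite -!addnn in jn; lia.
rewrite ffactnSr !expnSr.
have -> : n ^_ j * (n - j) * (2 ^ j * 2) = (n ^_ j * 2 ^ j) * ((n - j) * 2) by lia.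
exact: leq_mul.
Qed.

Definition binom_const (k : nat) : nat := 2 ^ k * k`!.

Lemma expn_le_bin n k : k.*2 <= n -> n ^ k <= 'C(n, k) * binom_const k.
Proof.
move=> kn; apply: leq_trans (expn_le_ffact kn) _.
by rewrite -bin_ffact /binom_const [2 ^ k * _]mulnC mulnA.
Qed.

Section NiceComplex.
Variables (n : nat) (K : {set {set 'I_n}}).

Definition top_size : nat := \max_(F in K) #|F|.

Lemma face_card_le (F : {set 'I_n}) : F \in K -> #|F| <= top_size.
Proof. by move=> FK; rewrite /top_size (bigD1 F FK) /= leq_maxl. Qed.

Lemma exists_top_face : K != set0 -> exists2 F, F \in K & #|F| = top_size.
Proof.
rewrite -card_gt0 => /(eq_bigmax_cond (fun F : {set 'I_n} => #|F|)) [F FK eF].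
by exists F.
Qed.

Hypothesis K_nice : nice K.

(* If n >= 2 top_size + 2, a set of size top_size + 1 and its complement
   are both too large to be faces, contradicting niceness. *)
Lemma nice_ground_le : n <= top_size.*2.+1.
Proof.
rewrite leqNgt; apply/negP => big_n.
have [G _ cG] : exists2 G : {set 'I_n}, G \subset setT & #|G| = top_size.+1.
  by apply: exists_subset_card; rewrite cardsT card_ord; rewrite -addnn in big_n; lia.
have G_out : G \notin K by apply/negP => /face_card_le; rewrite cG ltnn.
have CG_out : ~: G \notin K.
  apply/negP => /face_card_le; have := cardsC G.
  by rewrite card_ord cG; rewrite -addnn in big_n; lia.
by have := K_nice G; rewrite (negbTE G_out) (negbTE CG_out).
Qed.

(* When n = 2 top_size + 1, the complement of a small set is too large to be
   a face, so the set itself is one. *)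
Lemma nice_small_faces (G : {set 'I_n}) :
  n = top_size.*2.+1 -> #|G| <= top_size -> G \in K.
Proof.
move=> en cG; have CG_out : ~: G \notin K.
  apply/negP => /face_card_le; have := cardsC G.
  by rewrite card_ord; rewrite -addnn in en; lia.
by have := K_nice G; rewrite (negbTE CG_out) addbF.
Qed.

End NiceComplex.

Section JoinStructure.
Variables (s : nat) (ns : 'I_s -> nat) (K : forall i : 'I_s, {set {set 'I_(ns i)}}).
Local Notation jT := (jtype ns).
Local Notation inj_tag i := (Tagged (fun j => 'I_(ns j)) (i := i)).

Lemma card_fibers (F : {set jT}) : #|F| = \sum_i #|fiber i F|.
Proof.
rewrite -sum1_card (partition_big (fun x : jT => tag x) predT) //=.
apply: eq_bigr => i _; rewrite sum1_card.
rewrite -(card_imset (fiber i F) (@eq_from_Tagged _ (fun j => 'I_(ns j)) i)).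
apply: eq_card => x /=; rewrite [in LHS]unfold_in /=.
apply/andP/imsetP => [[xF /eqP <-]|[y]]; last by rewrite inE => yF ->.
by exists (tagged x); case: x xF => //= j y yF; rewrite inE.
Qed.

Definition glue (G : forall i, {set 'I_(ns i)}) : {set jT} :=
  [set x : jT | tagged x \in G (tag x)].

Lemma fiber_glue G i : fiber i (glue G) = G i.
Proof. by apply/setP => y; rewrite !inE. Qed.

Lemma fiber_join F i : F \in join K -> fiber i F \in K i.
Proof. by rewrite inE => /forallP. Qed.

Lemma fiber_vertex i (y : 'I_(ns i)) : fiber i [set inj_tag i y] = [set y].
Proof.
apply/setP => z; rewrite !inE; apply/eqP/eqP => [|-> //].
exact: eq_from_Tagged.
Qed.

Hypothesis K_complex : forall i, is_complex (K i).

(* Edges are faces, so their points are vertices. *)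
Lemma join_edges_sub_vertices d e :
  e \in join_edges K d -> e \subset join_vertices K.
Proof.
rewrite inE => /andP[e_join _]; apply/subsetP => x xe; rewrite !inE.
apply/forallP => i; have [_ closed] := K_complex i.
apply: closed (fiber_join i e_join) _; apply/subsetP => y.
by rewrite !inE => /eqP ->.
Qed.

Variable d : nat.
Hypothesis K_dim : join_dim_eq K d.

(* A largest face of the join is the disjoint union of largest faces. *)
Lemma sum_top_size : \sum_i top_size (K i) = d.+1.
Proof.
case: K_dim => [[F FK cF] join_le]; apply/eqP; rewrite eqn_leq; apply/andP; split.
  have top_ex i : exists G, (G \in K i) && (#|G| == top_size (K i)).
    by have [G GK cG] := exists_top_face (K_complex i).1; exists G; rewrite GK cG /=.
  pose G i := xchoose (top_ex i).
  have GK i : G i \in K i by case/andP: (xchooseP (top_ex i)).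
  have cG i : #|G i| = top_size (K i) by case/andP: (xchooseP (top_ex i)) => _ /eqP.
  have glue_join : glue G \in join K.
    by rewrite inE; apply/forallP => i; rewrite fiber_glue GK.
  have := join_le _ glue_join; rewrite card_fibers.
  by rewrite (eq_bigr (fun i => top_size (K i))) // => i _; rewrite fiber_glue cG.
rewrite -cF card_fibers; apply: leq_sum => i _.
exact/face_card_le/fiber_join.
Qed.

Hypothesis K_nice : forall i, nice (K i).

(* The fiber of the vertex set over i is empty when top_size (K i) = 0 (no
   singleton is then a face) and has at most n_i <= 2 top_size + 1
   <= 3 top_size points otherwise; sum over i using sum_top_size. *)
Lemma card_join_vertices : #|join_vertices K| <= 3 * d.+1.
Proof.
rewrite card_fibers -sum_top_size big_distrr /=; apply: leq_sum => i _.
have vertex_face y : y \in fiber i (join_vertices K) -> [set y] \in K i.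
  by rewrite !inE => /forallP /(_ i); rewrite fiber_vertex.
have [top0|top_pos] := posnP (top_size (K i)).
  rewrite top0 muln0 leqn0 cards_eq0; apply/eqP/setP => y; rewrite in_set0.
  by apply/negbTE/negP => /vertex_face/face_card_le; rewrite cards1 top0.
apply: leq_trans (max_card _) _; rewrite card_ord.
by have := nice_ground_le (@K_nice i); lia.
Qed.

Hypothesis K_size : \sum_(i < s) ns i = d.*2 + s + 2.

(* The vertex count condition makes each n_i extremal. *)
Lemma ground_card_eq i : ns i = (top_size (K i)).*2.+1.
Proof.
move: i; apply: sum_eq_termwise => [i|]; first exact: nice_ground_le (@K_nice i).
rewrite K_size (eq_bigr (fun i => 2 * top_size (K i) + 1)); last by move=> j _; lia.
by rewrite big_split /= -big_distrr /= sum_top_size sum1_card card_ord; lia.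
Qed.

(* Gluing any choice of top_size(K_i)-subsets gives an edge, hence
   #edges >= prod_i C(2a_i+1, a_i) >= prod_i 3^(a_i) = 3^(d+1). *)
Lemma card_join_edges : 3 ^ d.+1 <= #|join_edges K d|.
Proof.
pose P i := [pred G : {set 'I_(ns i)} | #|G| == top_size (K i)].
pose glue_f (g : {dffun forall i, {set 'I_(ns i)}}) := glue (fun i => g i).
have glue_inj : injective glue_f.
  move=> g1 g2 e; apply/ffunP => i.
  by rewrite -(fiber_glue (fun i => g1 i)) -(fiber_glue (fun i => g2 i)) -/(glue_f _) e.
have glue_edges : glue_f @: family P \subset join_edges K d.
  apply/subsetP => F /imsetP[g /familyP gP ->].
  have cg i : #|g i| = top_size (K i) by apply/eqP; have := gP i; rewrite inE.
  rewrite !inE; apply/andP; split.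
    apply/forallP => i; rewrite fiber_glue.
    by apply: nice_small_faces; [exact: K_nice | exact: ground_card_eq | rewrite cg].
  rewrite /glue_f card_fibers -sum_top_size; apply/eqP/eq_bigr => i _.
  by rewrite fiber_glue cg.
apply: leq_trans (subset_leq_card glue_edges); rewrite card_imset //.
rewrite card_family foldrE big_image /= -sum_top_size expn_sum.
apply: leq_prod => i _.
have -> : #|P i| = 'C(ns i, top_size (K i)).
  rewrite -[X in 'C(X, _)]card_ord -card_draws.
  by apply: eq_card => G; rewrite !inE.
by have := expn3_le_bin_central (top_size (K i)); rewrite -ground_card_eq.
Qed.

End JoinStructure.

Lemma copy_spans_dense_set d n (H : {set {set 'I_n}}) (s : nat) (ns : 'I_s -> nat)
    (K : forall i : 'I_s, {set {set 'I_(ns i)}}) :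
  (forall i, is_complex (K i)) -> (forall i, nice (K i)) ->
  join_dim_eq K d -> \sum_(i < s) ns i = d.*2 + s + 2 ->
  contains_copy (join_vertices K) (join_edges K d) H ->
  exists2 U : {set 'I_n}, #|U| <= 3 * d.+1 &
    3 ^ d.+1 <= #|[set e in H | e \subset U]|.
Proof.
move=> K_complex K_nice K_dim K_size [f [f_inj f_edges]].
exists (f @: join_vertices K).
  by apply: leq_trans (leq_imset_card _ _) _; apply: card_join_vertices.
apply: leq_trans (card_join_edges K_complex K_dim K_nice K_size) _.
have edges_sub e : e \in join_edges K d -> e \subset join_vertices K.
  exact: join_edges_sub_vertices.
have img_inj : {in join_edges K d &, injective (fun e : {set jtype ns} => f @: e)}.
  by move=> e1 e2 e1E e2E; apply: (imset_inj_on_subsets f_inj); rewrite inE edges_sub.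
rewrite -(card_in_imset img_inj); apply: subset_leq_card; apply/subsetP => F.
case/imsetP => e eE ->; rewrite inE f_edges //=.
exact/imsetS/edges_sub.
Qed.

(* Let BB be a family of E-subsets of A, with E > 0.
   Among the m-subsets Y of A, one contains at most the average number
   #|BB| C(|A|-E, m-E) / C(|A|, m) <= #|BB| (m/|A|)^E of members of BB;
   removing a transversal of those members leaves a BB-free set of size
   at least m - #|BB| (m/|A|)^E. *)
Section Deletion.
Variables (X : finType) (A : {set X}) (BB : {set {set X}}) (E m : nat).
Hypotheses (E_pos : 0 < E) (E_le_m : E <= m) (m_le_A : m <= #|A|).
Hypotheses (BB_sub : forall S, S \in BB -> S \subset A)
  (BB_card : forall S, S \in BB -> #|S| = E).

Definition msubsets : {set {set X}} := [set Y : {set X} | (Y \subset A) && (#|Y| == m)].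

Definition inside (Y : {set X}) : {set {set X}} := [set S in BB | S \subset Y].

Lemma card_msubsets : #|msubsets| = 'C(#|A|, m).
Proof. by rewrite -cards_draws; apply: eq_card => Y; rewrite !inE. Qed.

(* Removing S is a bijection onto the (m-E)-subsets of A minus S. *)
Lemma card_msubsets_containing S : S \in BB ->
  #|[set Y in msubsets | S \subset Y]| <= 'C(#|A| - E, m - E).
Proof.
move=> SB; have SA := BB_sub SB; have cS := BB_card SB.
have del_inj : {in [set Y in msubsets | S \subset Y] &, injective (fun Y => Y :\: S)}.
  move=> Y1 Y2; rewrite !inE => /andP[_ SY1] /andP[_ SY2] e.
  apply/setP => x; have [xS|xS] := boolP (x \in S).
    by rewrite (subsetP SY1 _ xS) (subsetP SY2 _ xS).
  by have := congr1 (fun Z : {set X} => x \in Z) e; rewrite /= !inE xS.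
rewrite -(card_in_imset del_inj).
have -> : #|A| - E = #|A :\: S| by rewrite cardsD (setIidPr SA) cS.
rewrite -cards_draws; apply: subset_leq_card; apply/subsetP => Z.
case/imsetP => Y; rewrite !inE => /andP[/andP[YA /eqP cY] SY] ->.
by rewrite setSD //= cardsD (setIidPr SY) cY cS eqxx.
Qed.

(* Double counting the pairs (Y, S) with S in BB and S inside Y. *)
Lemma sum_inside : \sum_(Y in msubsets) #|inside Y| <= #|BB| * 'C(#|A| - E, m - E).
Proof.
rewrite (eq_bigr (fun Y : {set X} => \sum_(S : {set X} | (S \in BB) && (S \subset Y)) 1));
  last first.
  by move=> Y _; rewrite sum1_card; apply: eq_card => S; rewrite !inE.
rewrite (exchange_big_dep (mem BB)) /=; last by move=> Y S _ /andP[].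
rewrite -sum_nat_const; apply: leq_sum => S SB.
apply: leq_trans (card_msubsets_containing SB); rewrite sum1_card.
by apply: subset_leq_card; apply/subsetP => Y; rewrite unfold_in /= !inE => /and3P[-> _ ->].
Qed.

Lemma exists_sparse_msubset :
  exists2 Y, Y \in msubsets & #|inside Y| * #|A| ^ E <= #|BB| * m ^ E.
Proof.
have [Y0 Y0m] : exists Y0, Y0 \in msubsets.
  by apply/card_gt0P; rewrite card_msubsets bin_gt0.
have [Y Ym Y_min] := arg_minnP (fun Y => #|inside Y|) Y0m.
exists Y => //.
have avg : 'C(#|A|, m) * #|inside Y| <= #|BB| * 'C(#|A| - E, m - E).
  apply: leq_trans sum_inside; rewrite -card_msubsets -sum_nat_const.
  exact: leq_sum.
have C_pos : 0 < 'C(#|A|, m) by rewrite bin_gt0.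
rewrite -(leq_pmul2l C_pos) mulnA.
apply: leq_trans (_ : #|BB| * 'C(#|A| - E, m - E) * #|A| ^ E <= _).
  by rewrite leq_mul2r avg orbT.
by rewrite -mulnA [X in _ <= X]mulnCA leq_mul2l bin_shift_le ?orbT.
Qed.

Lemma deletion : exists2 H : {set X}, H \subset A &
  (forall S, S \in BB -> ~~ (S \subset H)) /\
  m * #|A| ^ E <= #|H| * #|A| ^ E + #|BB| * m ^ E.
Proof.
have [Y] := exists_sparse_msubset; rewrite inE => /andP[YA /eqP cY] few.
have [R cR hitR] : exists2 R : {set X}, #|R| <= #|inside Y| &
    forall S, S \in inside Y -> exists2 x, x \in S & x \in R.
  apply: small_transversal => S; rewrite inE => /andP[SB _].
  by rewrite -card_gt0 BB_card.
exists (Y :\: R); first exact: subset_trans (subsetDl _ _) YA.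
split.
  move=> S SB; apply/negP => SH.
  have [|x xS xR] := hitR S; first by rewrite inE SB (subset_trans SH (subsetDl _ _)).
  by have := subsetP SH _ xS; rewrite inE xR.
have cH : m <= #|Y :\: R| + #|inside Y|.
  rewrite cardsD cY; have : #|Y :&: R| <= #|R| by apply/subset_leq_card/subsetIr.
  lia.
apply: leq_trans (_ : (#|Y :\: R| + #|inside Y|) * #|A| ^ E <= _).
  by rewrite leq_mul2r cH orbT.
by rewrite mulnDl leq_add2l.
Qed.

End Deletion.

Lemma ex_Fd_ge d n (H : {set {set 'I_n}}) :
  uniform d.+1 H -> Fd_free d H -> #|H| <= ex_Fd d n.
Proof.
move=> H_unif H_free; have H_freeb : Fd_freeb d H.
  by rewrite /Fd_freeb; case: excluded_middle_informative.
by apply: (@leq_bigmax_cond _ (fun H => uniform d.+1 H && Fd_freeb d H)); rewrite H_unif.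
Qed.

Section DenseConfigurations.
Variables (d n : nat).
Local Notation k := d.+1.
Local Notation w := (3 * d.+1).
Local Notation E := (3 ^ d.+1).

Definition ksets : {set {set 'I_n}} := [set e : {set 'I_n} | #|e| == k].

Definition dense_configs : {set {set {set 'I_n}}} :=
  [set S : {set {set 'I_n}} | [&& S \subset ksets, #|S| == E &
     [exists U : {set 'I_n}, (#|U| == w) && (S \subset powerset U)]]].

Lemma card_ksets : #|ksets| = 'C(n, k).
Proof. by rewrite -[n in RHS]card_ord -card_draws. Qed.

(* Each configuration is a set of subsets of some w-subset U of [n]. *)
Lemma card_dense_configs : #|dense_configs| <= n ^ w * 2 ^ (2 ^ w).
Proof.
have sub : dense_configs \subset
    \bigcup_(U : {set 'I_n} | #|U| == w) powerset (powerset U).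
  apply/subsetP => S; rewrite inE => /and3P[_ _ /existsP[U /andP[cU SU]]].
  by apply/bigcupP; exists U; rewrite ?inE.
apply: leq_trans (subset_leq_card sub) _.
apply: leq_trans (card_bigcup_le _ _) _.
rewrite (eq_bigr (fun _ => 2 ^ (2 ^ w))); last first.
  by move=> U /eqP cU; rewrite !card_powerset cU.
rewrite sum_nat_const leq_mul2r; apply/orP; right.
apply: leq_trans (bin_le_expn n w).
rewrite -[n in 'C(n, _)]card_ord -card_draws; apply/eq_leq/eq_card => U.
by rewrite inE.
Qed.

Lemma free_of_no_dense (H : {set {set 'I_n}}) : w <= n -> H \subset ksets ->
  (forall S, S \in dense_configs -> ~~ (S \subset H)) -> Fd_free d H.
Proof.
move=> w_le_n H_k H_sparse s ns K _ K_complex K_nice K_dim K_size copy.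
have [U0 cU0 dense] := copy_spans_dense_set K_complex K_nice K_dim K_size copy.
have [U U0U cU] : exists2 U : {set 'I_n}, U0 \subset U & #|U| = w.
  by apply: exists_superset_card; rewrite ?card_ord.
have [S S_in cS] := exists_subset_card dense.
have SH : S \subset H by apply: subset_trans S_in _; apply/subsetP => e; rewrite inE => /andP[].
suff S_dense : S \in dense_configs by move/negP: (H_sparse S S_dense).
rewrite inE (subset_trans SH H_k) cS eqxx /=.
apply/existsP; exists U; rewrite cU eqxx /=; apply/subsetP => e /(subsetP S_in).
by rewrite !inE => /andP[_ eU0]; apply: subset_trans eU0 U0U.
Qed.

Lemma ex_Fd_deletion m : w <= n -> E <= m -> m <= 'C(n, k) ->
  m * 'C(n, k) ^ E <= ex_Fd d n * 'C(n, k) ^ E + n ^ w * 2 ^ (2 ^ w) * m ^ E.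
Proof.
move=> w_le_n E_le_m m_le_N; rewrite -card_ksets in m_le_N *.
have [|||H H_k [H_sparse H_big]] := @deletion _ ksets dense_configs E m _ E_le_m m_le_N.
- by rewrite expn_gt0.
- by move=> S; rewrite inE => /and3P[].
- by move=> S; rewrite inE => /and3P[_ /eqP].
apply: leq_trans H_big _; apply: leq_add; last by rewrite leq_mul2r card_dense_configs orbT.
rewrite leq_mul2r; apply/orP; right; apply: ex_Fd_ge.
  by apply/forall_inP => e /(subsetP H_k); rewrite inE.
exact: free_of_no_dense.
Qed.

End DenseConfigurations.

(* Again k = d+1, w = 3k, E = 3^k and N = C(n, k).  If the bound
   n^w 2^(2^w) (m/N)^E on the number of dense configurations in the sparse
   m-set of k-sets is at most m/2, then ex(n, F_d) >= m/2. *)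
Lemma ex_Fd_ge_half d n m :
  3 * d.+1 <= n -> 3 ^ d.+1 <= m -> m <= 'C(n, d.+1) ->
  2 * (n ^ (3 * d.+1) * 2 ^ (2 ^ (3 * d.+1))) * m ^ (3 ^ d.+1).-1 <= 'C(n, d.+1) ^ 3 ^ d.+1 ->
  m <= 2 * ex_Fd d n.
Proof.
set N := 'C(n, d.+1); set E := 3 ^ d.+1; set B := n ^ _ * _ => w_le_n E_le_m m_le_N few.
have := ex_Fd_deletion w_le_n E_le_m m_le_N; rewrite -/N -/E -/B => del.
have N_pos : 0 < N ^ E by rewrite expn_gt0 bin_gt0; lia.
have mE : m ^ E = m * m ^ E.-1 by rewrite -expnS prednK // expn_gt0.
have : 2 * (B * m ^ E) <= m * N ^ E.
  by rewrite mE; have := leq_mul (leqnn m) few; lia.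
by move=> twice; rewrite -(leq_pmul2r N_pos); lia.
Qed.

(* The constant D for which D m^(E-1) <= n^(kE-w) guarantees the hypothesis
   of ex_Fd_ge_half. *)
Definition deletion_const (d : nat) : nat :=
  2 * 2 ^ (2 ^ (3 * d.+1)) * binom_const d.+1 ^ 3 ^ d.+1.

Lemma deletion_const_pos d : 0 < deletion_const d.
Proof. by rewrite /deletion_const /binom_const !(muln_gt0, expn_gt0) fact_gt0. Qed.

(* Via N c >= n^k (c = binom_const k), the hypothesis of ex_Fd_ge_half and
   m <= N both follow from D m^(E-1) <= n^(kE-w). *)
Lemma ex_Fd_ge_power d n m :
  3 * d.+1 <= n -> 3 ^ d.+1 <= m ->
  deletion_const d * m ^ (3 ^ d.+1).-1 <= n ^ (d.+1 * 3 ^ d.+1 - 3 * d.+1) ->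
  m <= 2 * ex_Fd d n.
Proof.
set k := d.+1; set w := 3 * k; set E := 3 ^ k; set N := 'C(n, k).
set c := binom_const k; rewrite /deletion_const -/c => w_le_n E_le_m small_m.
have n_le_N : n ^ k <= N * c by apply: expn_le_bin; rewrite -addnn; lia.
have c_pos : 0 < c by rewrite /c /binom_const muln_gt0 expn_gt0 fact_gt0.
have n_pos : 0 < n by lia.
have E3 : 3 <= E by rewrite /E expnS leq_pmulr ?expn_gt0.
have w_le_kE : w <= k * E by rewrite /w mulnC leq_mul2l E3 orbT.
have m_le_N : m <= N.
  have E1_pos : 0 < E.-1 by lia.
  rewrite -(leq_pmul2r c_pos) -(leq_exp2r _ _ E1_pos).
  apply: leq_trans (_ : n ^ (k * E.-1) <= _); last by rewrite expnM leq_exp2r.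
  apply: leq_trans (_ : n ^ (k * E - w) <= _); last by apply: leq_pexp2l; lia.
  apply: leq_trans small_m; rewrite expnMn mulnC leq_mul2r; apply/orP; right.
  apply: leq_trans (_ : c ^ E <= _); first by apply: leq_pexp2l; lia.
  by rewrite leq_pmull // muln_gt0 !expn_gt0.
apply: ex_Fd_ge_half => //; rewrite -/k -/w -/E -/N.
rewrite -(@leq_pmul2r (c ^ E)) ?expn_gt0 ?c_pos // -expnMn.
apply: leq_trans (_ : n ^ (k * E) <= _); last by rewrite expnM leq_exp2r; lia.
rewrite -(subnKC w_le_kE) expnD.
apply: leq_trans (_ : n ^ w * (2 * 2 ^ (2 ^ w) * c ^ E * m ^ E.-1) <= _).
  by apply/eq_leq; lia.
by rewrite leq_mul2l small_m orbT.
Qed.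

(* Choosing m maximal with D m^(E-1) <= n^(kE-w) yields, for n large, some
   M = D (m+1) <= 4 D ex(n, F_d) with n^(kE-w) < M^(E-1). *)
Lemma ex_Fd_root_bound d : 0 < d -> exists N0, forall n, N0 <= n -> 0 < n /\
  exists2 M, M <= 4 * deletion_const d * ex_Fd d n &
    n ^ (d.+1 * 3 ^ d.+1 - 3 * d.+1) < M ^ (3 ^ d.+1).-1.
Proof.
move=> d_pos; set k := d.+1; set w := 3 * k; set E := 3 ^ k; set a := k * E - w.
set D := deletion_const d; have D_pos : 0 < D := deletion_const_pos d.
have E9 : 9 <= E by rewrite /E /k -(prednK d_pos) !expnS; have := expn_gt0 3 d.-1; lia.
have a_pos : 0 < a by rewrite /a /w subn_gt0 mulnC ltn_mul2l /=; lia.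
exists (w + D * E ^ E.-1) => n n_large; have n_pos : 0 < n by lia.
split => //.
pose fits j := D * j ^ E.-1 <= n ^ a.
have fits0 : fits 0 by rewrite /fits exp0n ?muln0 //; lia.
have fits_bounded j : fits j -> j <= n ^ a.
  move=> fj; apply: leq_trans fj; have [->|j_pos] := posnP j; first by [].
  apply: leq_trans (_ : j ^ E.-1 <= _); last by rewrite leq_pmull.
  by rewrite -{1}(expn1 j); apply: leq_pexp2l => //; lia.
have [m fits_m m_max] := ex_maxnP (ex_intro fits 0 fits0) fits_bounded.
have fitsE : fits E.
  by apply: leq_trans (_ : n <= _); [lia | rewrite -{1}(expn1 n); apply: leq_pexp2l].
have E_le_m : E <= m := m_max _ fitsE.
have m_le_ex := ex_Fd_ge_power (leq_trans (leq_addr _ _) n_large) E_le_m fits_m.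
exists (D * m.+1); first by rewrite [4 * D]mulnC -mulnA leq_mul2l; apply/orP; right; lia.
rewrite ltnNge; apply/negP => big.
suff : fits m.+1 by move/m_max; rewrite ltnn.
apply: leq_trans big; rewrite expnMn leq_mul2r; apply/orP; right.
by rewrite -{1}(expn1 D); apply: leq_pexp2l => //; lia.
Qed.

From Stdlib Require Import Reals Lra.
Open Scope R_scope.

Lemma Natpow_expn (m j : nat) : Nat.pow m j = expn m j.
Proof. by elim: j => [|j ih] //=; rewrite expnS ih. Qed.

Lemma INR_expn (m j : nat) : INR (expn m j) = INR m ^ j.
Proof. by rewrite -Natpow_expn pow_INR. Qed.

Lemma Rpower_lt_of_pow_lt (x y al : R) (e p : nat) :
  0 < x -> 0 <= y -> al * INR e = INR p -> x ^ p < y ^ e -> Rpower x al < y.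
Proof.
move=> x_pos y_ge0 al_e lt_pe; apply: Rnot_le_lt => y_le.
have Y_pos : 0 < Rpower x al by apply: exp_pos.
have : y ^ e <= Rpower x al ^ e by apply: pow_incr.
rewrite -(Rpower_pow _ _ Y_pos) Rpower_mult al_e Rpower_pow //.
lra.
Qed.

Lemma exponent_identity (d : nat) :
  (INR (d.+1) - 2 * INR (d.+1) / (INR (expn 3 d.+1) - 1)) * INR (expn 3 d.+1).-1 =
  INR (d.+1 * expn 3 d.+1 - 3 * d.+1).
Proof.
have E3 : (3 <= expn 3 d.+1)%nat by rewrite expnS leq_pmulr // expn_gt0.
have E3R : 3 <= INR (expn 3 d.+1).
  have INR3 : INR 3 = 3 by simpl; lra.
  by rewrite -INR3; apply: le_INR; apply/leP.
rewrite -subn1 !minus_INR; try apply/leP; last 2 first.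
- by rewrite [X in (_ <= X)%nat]mulnC leq_mul2r E3 orbT.
- by rewrite expn_gt0.
rewrite !mult_INR /=; field; lra.
Qed.

Theorem corollary3p17 (d : nat) (hd : (1 <= d)%nat) :
  exists C : R, 0 < C /\
  exists N : nat, forall n : nat, (N <= n)%nat ->
    C * Rpower (INR n)
      (INR (d + 1) - 2 * INR (d + 1) / (INR (3 ^ (d + 1)) - 1))
    <= INR (ex_Fd d n).
Proof.
have [N0 bound] := ex_Fd_root_bound hd.
have D_pos : 0 < INR (4 * deletion_const d).
  by apply: (lt_INR 0); apply/ltP; rewrite muln_gt0 deletion_const_pos.
exists (/ INR (4 * deletion_const d)); split; first exact: Rinv_0_lt_compat.
exists N0 => n n_large; have [n_pos [M M_le root_lt]] := bound n n_large.
rewrite addn1 Natpow_expn.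
have root : Rpower (INR n) (INR (d.+1) - 2 * INR (d.+1) / (INR (expn 3 d.+1) - 1)) < INR M.
  apply: Rpower_lt_of_pow_lt (exponent_identity d) _; first by apply: (lt_INR 0); apply/ltP.
    exact: pos_INR.
  by rewrite -!INR_expn; apply: lt_INR; apply/ltP.
have M_leR : INR M <= INR (4 * deletion_const d) * INR (ex_Fd d n).
  by rewrite -mult_INR; apply: le_INR; apply/leP.
apply: (Rmult_le_reg_l (INR (4 * deletion_const d))) => //.
rewrite -Rmult_assoc Rinv_r; lra.
Qed.
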